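(* Let $G$ be a $k$-degenerate graph with maximum degree $\Delta(G)$ and let $H$ be an $l$-degenerate graph. Then $G+_T H$ is $\max\{2\Delta(G),\,k+l\}$-degenerate.
   Context: A graph is $k$-degenerate if its vertices can be successively deleted so that each deleted vertex has degree at most $k$ at the time of deletion. The total graph $T(G)$ has vertex set $V(G)\cup E(G)$: it consists of $G$, together with, for each edge $e=xy$, edges $ex$ and $ey$, and edges $ee'$ whenever edges $e,e'$ are adjacent in $G$. The $T$-sum $G+_T H$ has vertex set $(V(G)\cup E(G))\times V(H)$, and $(u_1,u_2)\sim(v_1,v_2)$ iff [$u_1=v_1\in V(G)$ and $u_2v_2\in E(H)$] or [$u_2=v_2$ and $u_1v_1\in E(T(G))$]. *)

(* finite simple graphs as symmetric irreflexive relations on a finType. *)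
From mathcomp Require Import all_boot.
Set Implicit Arguments. Unset Strict Implicit. Unset Printing Implicit Defensive.

Definition simple_graph (V : finType) (g : rel V) : Prop :=
  symmetric g /\ irreflexive g.

(* k-degenerate: the vertices can be deleted one by one in the order of the
   sequence s (each vertex exactly once) so that each deleted vertex has at most
   k neighbours among the not-yet-deleted vertices. *)
Definition degenerate (V : finType) (g : rel V) (k : nat) : Prop :=
  exists s : seq V,
    [/\ uniq s, (forall x, x \in s) &
        forall s1 x s2, s = s1 ++ x :: s2 -> #|[set y | (y \in s2) && g x y]| <= k].

Definition degree (V : finType) (g : rel V) (v : V) : nat := #|[set u | g v u]|.

(* maximum degree Delta(G) (0 for the empty graph) *)
Definition maxdeg (V : finType) (g : rel V) : nat := \max_(v : V) degree g v.

Definition is_edge (V : finType) (g : rel V) (e : {set V}) : bool :=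
  [exists x, exists y, g x y && (e == [set x; y])].

Definition edge_type (V : finType) (g : rel V) : finType :=
  {e : {set V} | is_edge g e}.

Definition total_rel (V : finType) (g : rel V) : rel (V + edge_type g)%type :=
  fun a b =>
    match a, b with
    | inl x, inl y => g x y
    | inl x, inr e => x \in val e
    | inr e, inl x => x \in val e
    | inr e, inr f => (e != f) && (val e :&: val f != set0)
    end.

Definition tsum_rel (V : finType) (g : rel V) (W : finType) (h : rel W)
  : rel ((V + edge_type g) * W)%type :=
  fun a b =>
    (match a.1, b.1 with
     | inl x, inl y => (x == y) && h a.2 b.2
     | _, _ => false
     end)
    || ((a.2 == b.2) && @total_rel V g a.1 b.1).

Arguments total_rel {V} g.
Arguments tsum_rel {V} g {W} h.

From mathcomp Require Import all_boot zify.

Set Implicit Arguments.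
Unset Strict Implicit.
Unset Printing Implicit Defensive.

(* Delete every edge vertex (e, w) first: in the whole T-sum it has only the
   neighbours (x, w), (y, w) for e = xy and (e', w) for the edges e' meeting e,
   at most 2 + (deg x - 1) + (deg y - 1) <= 2 Delta(G) of them.  Then delete the
   vertex copies (x, w) in the lexicographic order of (rank_G x, rank_H w), where
   the ranks come from degeneracy orderings of G and H: the later neighbours of
   (x, w) are later G-neighbours (z, w) of x and later H-neighbours (x, w') of w,
   at most k + l of them. *)

Section DegeneracyRank.

Variables (T : finType) (g : rel T) (k : nat).

Lemma degenerate_of_rank (f : T -> nat) :
  (forall x, #|[set y | (f x <= f y) && (y != x) && g x y]| <= k) -> degenerate g k.
Proof.
move=> later_le_k.
pose leT a b := f a <= f b.
have leT_total : total leT by move=> a b; rewrite /leT leq_total.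
have leT_trans : transitive leT by move=> b a c; exact: leq_trans.
have sort_uniq_enum : uniq (sort leT (enum T)) by rewrite sort_uniq enum_uniq.
exists (sort leT (enum T)); split=> // [x|s1 x s2 def_s].
  by rewrite mem_sort mem_enum.
have := sort_sorted leT_total (enum T).
rewrite def_s sorted_cat_cons => /andP[_ /(order_path_min leT_trans) x_le_s2].
move: sort_uniq_enum; rewrite def_s cat_uniq /= => /and3P[_ _ /andP[x_notin_s2 _]].
apply: leq_trans (later_le_k x); apply/subset_leq_card/subsetP => y.
rewrite !inE => /andP[y_in_s2 ->]; rewrite andbT [_ <= _](allP x_le_s2 y y_in_s2) /=.
by apply: contraNneq x_notin_s2 => <-.
Qed.

Lemma rank_of_degenerate :
  degenerate g k -> exists f : T -> nat,
    injective f /\ forall x, #|[set y | (f x < f y) && g x y]| <= k.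
Proof.
move=> [s [s_uniq s_all s_later]].
exists (index^~ s); split=> [a b|x]; first exact: index_inj.
have [s1 [s2 def_s]] : exists s1 s2, s = s1 ++ x :: s2.
  by case/splitPr: (s_all x) => s1 s2; exists s1, s2.
apply: leq_trans (s_later _ _ _ def_s); apply/subset_leq_card/subsetP => y.
rewrite !inE => /andP[+ ->]; rewrite andbT.
move: s_uniq (s_all y); rewrite def_s cat_uniq /=.
move=> /and3P[_ /norP[x_notin_s1 _] /andP[x_notin_s2 _]].
rewrite !index_cat !mem_cat (negbTE x_notin_s1) /= eqxx addn0 inE.
case: ifP => [y_in_s1 _|_]; first by rewrite ltnNge ltnW // index_mem.
by rewrite eq_sym; case: eqP => [_|_ /= ->]; rewrite ?addn0 ?ltnn.
Qed.

End DegeneracyRank.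

Lemma leq_mixed_radix (N a b c d : nat) :
  d < N -> a * N + b <= c * N + d -> (a < c) || ((a == c) && (b <= d)).
Proof.
move=> d_lt_N le_ac.
case: (ltngtP a c) => [//|c_lt_a|eq_ac]; last by move: le_ac; rewrite eq_ac leq_add2l.
suff : c * N + d < a * N + b by rewrite ltnNge le_ac.
apply: (leq_trans _ (leq_addr _ _)); apply: (@leq_trans (c.+1 * N)).
  by rewrite mulSn addnC ltn_add2r.
by rewrite leq_mul2r c_lt_a orbT.
Qed.

Section Edges.

Variables (V : finType) (g : rel V).

Lemma edge_ends (e : edge_type g) : exists x y, g x y /\ val e = [set x; y].
Proof. by case: e => /= e /existsP[x /existsP[y /andP[gxy /eqP ->]]]; exists x, y. Qed.

Lemma degree_le_maxdeg x : degree g x <= maxdeg g.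
Proof. exact: (leq_bigmax (F := degree g) x). Qed.

Hypothesis g_sym : symmetric g.

Lemma card_adjacent_edges (e : edge_type g) x y :
  g x y -> val e = [set x; y] ->
  #|[set e' | (e' != e) && (val e' :&: val e != set0)]| + 2
    <= degree g x + degree g y.
Proof.
move=> gxy def_e.
set A := [set [set x; z] | z in [set z | g x z]].
set B := [set [set y; z] | z in [set z | g y z]].
have A_le : #|A| <= degree g x by exact: leq_imset_card.
have B_le : #|B| <= degree g y by exact: leq_imset_card.
have eA : val e \in A by apply/imsetP; exists y; rewrite ?inE.
have eB : val e \in B by apply/imsetP; exists x; rewrite ?inE 1?g_sym // setUC.
have cardA := cardsD1 (val e) A; have cardB := cardsD1 (val e) B.
rewrite eA in cardA; rewrite eB in cardB.
suff : #|[set e' | (e' != e) && (val e' :&: val e != set0)]|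
         <= #|A :\ val e| + #|B :\ val e| by lia.
rewrite -(card_imset _ val_inj); apply: leq_trans (leq_card_setU _ _).
apply/subset_leq_card/subsetP => _ /imsetP[e' /[!inE] /andP[ne' /set0Pn[c c_in]] ->].
have [a [b [gab def_e']]] := edge_ends e'.
have -> : val e' != val e by apply: contraNneq ne' => /val_inj ->.
move: c_in; rewrite def_e def_e' !inE => /andP[/orP[]/eqP-> /orP[]/eqP c_end].
all: subst; apply/orP.
all: by [ left; apply/imsetP; exists b; rewrite ?inE
     | right; apply/imsetP; exists b; rewrite ?inE
     | left; apply/imsetP; exists a; rewrite ?inE 1?g_sym // setUC
     | right; apply/imsetP; exists a; rewrite ?inE 1?g_sym // setUC ].
Qed.

End Edges.

Section TSum.

Variables (V : finType) (g : rel V) (W : finType) (h : rel W).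
Hypothesis g_sym : symmetric g.

Lemma tsum_edge_degree (e : edge_type g) (w : W) :
  degree (tsum_rel g h) (inr e, w) <= 2 * maxdeg g.
Proof.
have [x [y [gxy def_e]]] := edge_ends e.
set E' := [set e' | (e' != e) && (val e' :&: val e != set0)].
have adj := card_adjacent_edges g_sym gxy def_e; rewrite -/E' in adj.
apply: (@leq_trans #|[set (inl z, w) | z in [set x; y]] :|: [set (inr e', w) | e' in E']|).
  apply/subset_leq_card/subsetP => -[[z|e'] w']; rewrite !inE /tsum_rel /=.
    by case/andP=> /eqP <- z_e; apply/orP; left; apply/imsetP; exists z; rewrite -?def_e.
  case/andP=> /eqP <- /andP[ne' meet]; apply/orP; right; apply/imsetP.
  by exists e'; rewrite // inE eq_sym ne' setIC.
apply: leq_trans (leq_card_setU _ _) _.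
have ends_le := leq_imset_card (fun z => (inl z, w) : (V + edge_type g) * W) [set x; y].
have two_ends : #|[set x; y]| <= 2 by rewrite cards2; case: (x != y).
have adj_le := leq_imset_card (fun e' => (inr e', w) : (V + edge_type g) * W) E'.
have := degree_le_maxdeg g x; have := degree_le_maxdeg g y; lia.
Qed.

Variables (rG : V -> nat) (rH : W -> nat) (N : nat).
Hypotheses (rG_inj : injective rG) (rH_inj : injective rH) (rH_lt : forall w, rH w < N).

Definition tsum_rank (p : (V + edge_type g) * W) : nat :=
  if p.1 is inl x then (rG x * N + rH p.2).+1 else 0.

Lemma tsum_vertex_later_nbrs (x : V) (w : W) :
  #|[set q | (tsum_rank (inl x, w) <= tsum_rank q) && (q != (inl x, w))
             && tsum_rel g h (inl x, w) q]|
    <= #|[set z | (rG x < rG z) && g x z]| + #|[set w' | (rH w < rH w') && h w w']|.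
Proof.
set SG := [set z | (rG x < rG z) && g x z].
set SH := [set w' | (rH w < rH w') && h w w'].
pose S : {set (V + edge_type g) * W} :=
  [set (inl z, w) | z in SG] :|: [set (inl x, w') | w' in SH].
apply: (@leq_trans #|S|).
  apply/subset_leq_card/subsetP => -[[z|e] w']; rewrite !inE //= ltnS xpair_eqE /=.
  rewrite /tsum_rel /=; case/andP=> /andP[/leq_mixed_radix-/(_ (rH_lt w')) lex ne].
  case/orP=> [/andP[/eqP eq_xz hww']|/andP[/eqP eq_ww' gxz]]; apply/orP.
    move: ne lex; rewrite -eq_xz !eqxx ltnn /= leq_eqVlt => ne lex.
    right; apply/imsetP; exists w'; rewrite // inE hww' andbT.
    by case/orP: lex => // /eqP/rH_inj eq_ww'; rewrite eq_ww' eqxx in ne.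
  move: ne; rewrite -eq_ww' eqxx andbT => ne.
  left; apply/imsetP; exists z; rewrite // inE gxz andbT.
  by case/orP: lex => // /andP[/eqP/rG_inj eq_xz]; rewrite eq_xz eqxx in ne.
apply: leq_trans (leq_card_setU _ _) _.
by apply: leq_add; apply: leq_imset_card.
Qed.

End TSum.

Theorem theorem4 (V : finType) (g : rel V) (W : finType) (h : rel W) (k l : nat) :
  simple_graph g -> simple_graph h ->
  degenerate g k -> degenerate h l ->
  degenerate (tsum_rel g h) (maxn (2 * maxdeg g) (k + l)).
Proof.
move=> [g_sym _] _ /rank_of_degenerate[rG [rG_inj rG_later]].
move=> /rank_of_degenerate[rH [rH_inj rH_later]].
pose N := (\max_(w : W) rH w).+1.
have rH_lt w : rH w < N by rewrite ltnS (leq_bigmax (F := rH) w).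
apply: (degenerate_of_rank (f := tsum_rank rG rH N)) => -[[x|e] w].
- apply: leq_trans (leq_maxr _ _).
  apply: leq_trans (tsum_vertex_later_nbrs g h rG_inj rH_inj rH_lt x w) _.
  exact: leq_add.
- apply: leq_trans (leq_maxl _ _); apply: leq_trans (tsum_edge_degree h g_sym e w).
  by apply/subset_leq_card/subsetP => q; rewrite !inE => /andP[].
Qed.
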